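(* Let $q$ be a prime power, $2\le n\le m$, and let $\mathcal{C}_1,\mathcal{C}_2\subseteq\mathrm{Mat}$ be rank-metric codes with $\mathcal{C}_1\sim\mathcal{C}_2$. If $m>n$, then $P(\mathcal{C}_1,\mathrm c)\sim P(\mathcal{C}_2,\mathrm c)$ and $P(\mathcal{C}_1,\mathrm r)\sim P(\mathcal{C}_2,\mathrm r)$. If $n=m$, then either $P(\mathcal{C}_1,\mathrm c)\sim P(\mathcal{C}_2,\mathrm c)$ and $P(\mathcal{C}_1,\mathrm r)\sim P(\mathcal{C}_2,\mathrm r)$, or $P(\mathcal{C}_1,\mathrm c)\sim P(\mathcal{C}_2,\mathrm r)$ and $P(\mathcal{C}_1,\mathrm r)\sim P(\mathcal{C}_2,\mathrm c)$.
   Context: $\mathrm{Mat}$ is the $\mathbb{F}_q$-space of $n\times m$ matrices over $\mathbb{F}_q$; a rank-metric code is an $\mathbb{F}_q$-linear subspace. Codes are equivalent ($\mathcal{C}_1\sim\mathcal{C}_2$) if there is an $\mathbb{F}_q$-linear isometry $f:\mathrm{Mat}\to\mathrm{Mat}$ for the rank metric $d(M,N)=\mathrm{rk}(M-N)$ with $f(\mathcal{C}_1)=\mathcal{C}_2$. For subspaces $J\subseteq\mathbb{F}_q^n$, $K\subseteq\mathbb{F}_q^m$: $\mathcal{C}(J,\mathrm c)=\{M\in\mathcal{C}\mid\mathrm{colsp}(M)\subseteq J\}$, $\mathcal{C}(K,\mathrm r)=\{M\in\mathcal{C}\mid\mathrm{rowsp}(M)\subseteq K\}$, $\rho_{\mathrm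 c}(\mathcal{C},J)=(\dim\mathcal{C}-\dim\mathcal{C}(J^\perp,\mathrm c))/m$, $\rho_{\mathrm r}(\mathcal{C},K)=(\dim\mathcal{C}-\dim\mathcal{C}(K^\perp,\mathrm r))/n$ ($\perp$ for the standard inner product). $P(\mathcal{C},\mathrm c)=(\mathbb{F}_q^n,\rho_{\mathrm c}(\mathcal{C},\cdot))$ and $P(\mathcal{C},\mathrm r)=(\mathbb{F}_q^m,\rho_{\mathrm r}(\mathcal{C},\cdot))$ (these are $q$-polymatroids). Two pairs $(\mathbb{F}_q^N,\rho_1)$, $(\mathbb{F}_q^N,\rho_2)$ are equivalent ($\sim$) if there is an $\mathbb{F}_q$-linear isomorphism $\varphi:\mathbb{F}_q^N\to\mathbb{F}_q^N$ with $\rho_1(A)=\rho_2(\varphi(A))$ for all subspaces $A$. *)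

From HB Require Import structures.
From mathcomp Require Import all_boot all_order all_algebra all_fingroup all_field.
Set Implicit Arguments. Unset Strict Implicit. Unset Printing Implicit Defensive.
Import GRing.Theory Num.Theory.
Local Open Scope ring_scope.

(* F is the finite field F_q (q = #|F| is automatically a prime power).
   Mat = 'M[F]_(n, m); F^N = 'rV[F]_N; subspaces are {vspace _}. *)

Section Defs.
Variable F : finFieldType.

(* subspace of a finite vector type cut out by a boolean predicate
   (used only for predicates defining subspaces) *)
Definition subsp_of (vT : vectType F) (T : finType) (f : T -> vT) (P : pred T)
  : {vspace vT} := (<< [seq f x | x <- enum T & P x] >>)%VS.

Definition dotv N (x y : 'rV[F]_N) : F := \sum_(i < N) x 0 i * y 0 i.
Definition perp N (J : {vspace 'rV[F]_N}) : {vspace 'rV[F]_N} :=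
  subsp_of (@id 'rV[F]_N) (fun x => [forall y : 'rV[F]_N, (y \in J) ==> (dotv x y == 0)]).

Variables n m : nat.

Definition colsp_sub (M : 'M[F]_(n, m)) (J : {vspace 'rV[F]_n}) : bool :=
  [forall j : 'I_m, (col j M)^T \in J].
Definition rowsp_sub (M : 'M[F]_(n, m)) (K : {vspace 'rV[F]_m}) : bool :=
  [forall i : 'I_n, row i M \in K].

Definition subcode_c (C : {vspace 'M[F]_(n, m)}) (J : {vspace 'rV[F]_n}) :=
  subsp_of (@id 'M[F]_(n, m)) (fun M => (M \in C) && colsp_sub M J).
Definition subcode_r (C : {vspace 'M[F]_(n, m)}) (K : {vspace 'rV[F]_m}) :=
  subsp_of (@id 'M[F]_(n, m)) (fun M => (M \in C) && rowsp_sub M K).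

(* rank functions of P(C, c) and P(C, r) *)
Definition rho_c (C : {vspace 'M[F]_(n, m)}) (J : {vspace 'rV[F]_n}) : rat :=
  ((\dim C)%:R - (\dim (subcode_c C (perp J)))%:R) / m%:R.
Definition rho_r (C : {vspace 'M[F]_(n, m)}) (K : {vspace 'rV[F]_m}) : rat :=
  ((\dim C)%:R - (\dim (subcode_r C (perp K)))%:R) / n%:R.

Definition code_equiv (C1 C2 : {vspace 'M[F]_(n, m)}) : Prop :=
  exists f : {linear 'M[F]_(n, m) -> 'M[F]_(n, m)},
    (forall M N : 'M[F]_(n, m), \rank (f M - f N) = \rank (M - N)) /\
    (linfun f @: C1)%VS = C2.
End Defs.

(* equivalence of pairs (F^N1, rho1), (F^N2, rho2): an F-linear isomorphism
   phi with rho1 A = rho2 (phi A) for all subspaces A (this forces N1 = N2;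
   the two dimensions are kept separate only so that P(C,c) and P(C,r) can be
   compared when n = m without casts) *)
Definition pm_equiv (F : finFieldType) (N1 N2 : nat)
  (rho1 : {vspace 'rV[F]_N1} -> rat) (rho2 : {vspace 'rV[F]_N2} -> rat) : Prop :=
  exists phi : {linear 'rV[F]_N1 -> 'rV[F]_N2},
    bijective phi /\ forall A : {vspace 'rV[F]_N1}, rho1 A = rho2 (linfun phi @: A)%VS.

(* An isometry f for the rank metric is a linear map preserving rank, so it sends
   the rank-one matrices u^T x to rank-one matrices.  A linear space of matrices of
   rank at most one has all its columns, or all its rows, on a common line; so for
   each u the image of u^T F^m is of "column kind" or of "row kind".  If all these
   images are of column kind, reading their column lines off f (u^T w) for one fixed
   w gives an invertible A with colsp f (u^T x) = <u A>; for dimension reasons the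
   images of (F^n)^T x are then of row kind, which likewise gives an invertible B
   with rowsp f (u^T x) = <x B>.  Splitting M into rank-one pieces,
   colsp f (M) = colsp (A^T M) and rowsp f (M) = rowsp (M B), so J |-> J A^-T and
   K |-> K B^-T turn the subcodes defining P(C1, c) and P(C1, r) into those defining
   P(C2, c) and P(C2, r).  An image of row kind would embed F^m into F^n, which is
   impossible when m > n; when n = m, either f or its transpose has images of column
   kind only, and transposing exchanges columns and rows. *)

From mathcomp Require Import all_boot all_order all_algebra all_fingroup all_field.
Set Implicit Arguments. Unset Strict Implicit. Unset Printing Implicit Defensive.
Import GRing.Theory.
Local Open Scope ring_scope.

Section OuterProducts.
Variable F : fieldType.

Lemma outer_row_decomp n m (M : 'M[F]_(n, m)) :
  M = \sum_(i < n) (delta_mx 0 i)^T *m row i M.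
Proof.
rewrite -[LHS]mul1mx mx1_sum_delta mulmx_suml; apply: eq_bigr => i _.
by rewrite rowE mulmxA trmx_delta mul_delta_mx.
Qed.

Lemma pid_rV_neq0 k : (0 < k)%N -> (pid_mx 1 : 'rV[F]_k) != 0.
Proof. by move=> k0; rewrite -mxrank_eq0 rank_pid_mx. Qed.

Lemma rank_outer_le1 n m (u : 'rV[F]_n) (x : 'rV[F]_m) : (\rank (u^T *m x) <= 1)%N.
Proof. exact: leq_trans (mxrankM_maxr _ _) (rank_leq_row x). Qed.

Lemma outer_neq0 n m (u : 'rV[F]_n) (x : 'rV[F]_m) :
  u != 0 -> x != 0 -> u^T *m x != 0.
Proof.
move=> u0 x0; rewrite -mxrank_eq0 mxrankMfree ?mxrank_tr ?rank_rV ?u0 //.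
by rewrite /row_free rank_rV x0.
Qed.

Lemma rank1_outer n m (M : 'M[F]_(n, m)) :
  \rank M = 1%N -> exists (u : 'rV_n) (x : 'rV_m), M = u^T *m x.
Proof.
move=> rM; have := mulmx_base M; move: (col_base M) (row_base M).
by rewrite rM => U X UX; exists U^T, X; rewrite trmxK UX.
Qed.

Lemma rV_sub_nz p n (X : 'M[F]_(p, n)) (v : 'rV_n) :
  X != 0 -> (X <= v)%MS -> (v <= X)%MS.
Proof.
move=> X0 Xv; rewrite -(mxrank_leqif_sup Xv).2 eqn_leq mxrankS //=.
by rewrite rank_rV; case: (v != 0); rewrite // lt0n mxrank_eq0.
Qed.

Lemma sub_outer_eq n m (u v : 'rV[F]_n) (x y : 'rV[F]_m) :
  u^T *m x = v^T *m y -> y != 0 -> (v <= u)%MS.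
Proof.
move=> uxvy y0; have [->|v0] := eqVneq v 0; first exact: sub0mx.
have vyu : (y^T *m v <= u)%MS.
  by rewrite -[_ *m v]trmxK trmx_mul trmxK -uxvy trmx_mul trmxK submxMl.
apply: submx_trans (rV_sub_nz _ (submxMl _ _)) vyu.
by rewrite -trmx_eq0 trmx_mul trmxK outer_neq0.
Qed.

Lemma row_free_col_mx2 n (a c : 'rV[F]_n) :
  a != 0 -> ~~ (c <= a)%MS -> row_free (col_mx a c).
Proof.
move=> a0 ca; rewrite /row_free eqn_leq rank_leq_row -addsmxE.
have a_lt_ac : (a < a + c)%MS by rewrite ltmxE addsmxSl addsmx_sub submx_refl.
by have := rank_ltmx a_lt_ac; rewrite rank_rV a0.
Qed.

Lemma rank_outer_add_le1 n m (a : 'rV[F]_n) (b : 'rV[F]_m) (Y : 'M[F]_(n, m)) :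
  a != 0 -> b != 0 -> (\rank Y <= 1)%N -> (\rank (a^T *m b + Y)%R <= 1)%N ->
  (Y^T <= a)%MS || (Y <= b)%MS.
Proof.
move=> a0 b0 rY; have [-> _|Y0] := eqVneq Y 0; first by rewrite trmx0 sub0mx.
have [c [d ->]] : exists (c : 'rV_n) (d : 'rV_m), Y = c^T *m d.
  by apply: rank1_outer; apply/eqP; rewrite eqn_leq rY lt0n mxrank_eq0.
have [ca|ca] := boolP (c <= a)%MS.
  by rewrite trmx_mul trmxK (submx_trans (submxMl _ _) ca).
have [db|db] := boolP (d <= b)%MS.
  by rewrite (submx_trans (submxMl _ _) db) orbT.
have -> : a^T *m b + c^T *m d = (col_mx a c)^T *m col_mx b d.
  by rewrite tr_col_mx mul_row_col.
by rewrite mxrankMfree ?row_free_col_mx2 // mxrank_tr (eqP (row_free_col_mx2 a0 ca)).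
Qed.
End OuterProducts.

Lemma common_rowsp_factor (F : fieldType) k n m
    (g : {linear 'rV[F]_k -> 'M[F]_(n, m)}) (b : 'rV_m) :
  b != 0 -> (forall x, (g x <= b)%MS) -> (forall x, x != 0 -> g x != 0) ->
  exists2 K : 'M_(k, n), row_free K & forall x, g x = (x *m K)^T *m b.
Proof.
move=> b0 gb g_inj.
have [v bv] : exists v : 'cV_m, b *m v = 1%:M.
  by apply/row_freeP; rewrite /row_free rank_rV b0.
have gE x : g x = g x *m v *m b.
  by have [D ->] := submxP (gb x); rewrite -(mulmxA D) bv mulmx1.
pose K := lin1_mx (trmx \o mulmxr v \o g).
have xKE x : (x *m K)^T = g x *m v by rewrite mul_rV_lin1 /= trmxK.
exists K => [|x]; last by rewrite xKE -gE.
rewrite -kermx_eq0; apply/rowV0P => x /sub_kermxP xK0.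
have [//|x0] := eqVneq x 0.
by have := g_inj x x0; rewrite gE -xKE xK0 trmx0 mul0mx eqxx.
Qed.

Lemma common_colsp_factor (F : fieldType) k n m
    (g : {linear 'rV[F]_k -> 'M[F]_(n, m)}) (a : 'rV_n) :
  a != 0 -> (forall x, ((g x)^T <= a)%MS) -> (forall x, x != 0 -> g x != 0) ->
  exists2 H : 'M_(k, m), row_free H & forall x, g x = a^T *m (x *m H).
Proof.
move=> a0 ga g_inj.
have gT_inj x : x != 0 -> (trmx \o g) x != 0 by move=> x0; rewrite /= trmx_eq0 g_inj.
have [H Hfree gH] := common_rowsp_factor (g := trmx \o g) a0 ga gT_inj.
by exists H => // x; rewrite -[g x]trmxK [(g x)^T]gH trmx_mul trmxK.
Qed.

Lemma rank_le1_family (F : finFieldType) k n m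
    (g : {linear 'rV[F]_k -> 'M[F]_(n, m)}) :
  (0 < k)%N -> (forall x, x != 0 -> g x != 0) -> (forall x, \rank (g x) <= 1)%N ->
  (exists2 a : 'rV_n, a != 0 & forall x, ((g x)^T <= a)%MS) \/
  (exists2 b : 'rV_m, b != 0 & forall x, (g x <= b)%MS).
Proof.
move=> k0 g_inj g_rk; pose x0 : 'rV[F]_k := pid_mx 1.
have gx0 : g x0 != 0 by rewrite g_inj ?pid_rV_neq0.
have [a [b gab]] : exists (a : 'rV_n) (b : 'rV_m), g x0 = a^T *m b.
  by apply: rank1_outer; apply/eqP; rewrite eqn_leq g_rk lt0n mxrank_eq0.
have a0 : a != 0 by apply: contraNneq gx0 => a0; rewrite gab a0 trmx0 mul0mx.
have b0 : b != 0 by apply: contraNneq gx0 => b0; rewrite gab b0 mulmx0.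
have col_or_row x : ((g x)^T <= a)%MS || (g x <= b)%MS.
  by apply: rank_outer_add_le1; rewrite // -gab -linearD g_rk.
have [/forallP col|/forallPn[z z_col]] := boolP [forall x, ((g x)^T <= a)%MS].
  by left; exists a.
have [/forallP row|/forallPn[y y_row]] := boolP [forall x, (g x <= b)%MS].
  by right; exists b.
(* [z] breaks the column condition and [y] the row condition, so [y + z] breaks both *)
have z_row : (g z <= b)%MS by move: (col_or_row z); rewrite (negbTE z_col).
have y_col : ((g y)^T <= a)%MS by move: (col_or_row y); rewrite (negbTE y_row) orbF.
case/orP: (col_or_row (y + z)); rewrite !linearD /= => yz.
  by case/negP: z_col; rewrite -[(g z)^T](addKr (g y)^T) addmx_sub // eqmx_opp.
by case/negP: y_row; rewrite -[g y](addrK (g z)) addmx_sub // eqmx_opp.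
Qed.

Lemma outer_rowsp_bound (F : fieldType) n m p q
    (g : {linear 'M[F]_(n, m) -> 'M[F]_(p, q)}) (B : 'M[F]_(m, q)) :
  (forall (u : 'rV_n) (x : 'rV_m), (g (u^T *m x) <= x *m B)%MS) ->
  forall M, (g M <= M *m B)%MS.
Proof.
move=> gB M; rewrite {1}(outer_row_decomp M) linear_sum summx_sub // => i _.
by apply: submx_trans (gB _ _) _; rewrite -row_mul row_sub.
Qed.

Definition col_pencil_preserving (F : fieldType) n m
    (f : 'M[F]_(n, m) -> 'M[F]_(n, m)) :=
  forall u : 'rV_n, exists a : 'rV_n, forall x : 'rV_m, ((f (u^T *m x))^T <= a)%MS.

Section RankPreservers.
Variables (F : finFieldType) (n m : nat) (f : {linear 'M[F]_(n, m) -> 'M[F]_(n, m)}).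
Hypothesis f_rank : forall M, \rank (f M) = \rank M.

Lemma rank_preserving_inj : injective f.
Proof.
move=> M N /eqP; rewrite -subr_eq0 -linearB -mxrank_eq0 f_rank mxrank_eq0 subr_eq0.
exact: eqP.
Qed.

Lemma outer_image_neq0 (u : 'rV_n) (x : 'rV_m) :
  u != 0 -> x != 0 -> f (u^T *m x) != 0.
Proof. by move=> u0 x0; rewrite -mxrank_eq0 f_rank mxrank_eq0 outer_neq0. Qed.

Lemma rank_outer_image_le1 (u : 'rV_n) (x : 'rV_m) : (\rank (f (u^T *m x)) <= 1)%N.
Proof. by rewrite f_rank rank_outer_le1. Qed.

Lemma col_pencil_bound : (2 <= n)%N -> (2 <= m)%N -> col_pencil_preserving f ->
  exists2 A : 'M_n, A \in unitmx &
    forall (u : 'rV_n) (x : 'rV_m), ((f (u^T *m x))^T <= u *m A)%MS.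
Proof.
move=> n2 m2 f_col; pose w : 'rV[F]_m := pid_mx 1.
have w0 : w != 0 by rewrite pid_rV_neq0 // ltnW.
have h_inj u : u != 0 -> (f \o mulmxr w \o trmx) u != 0.
  by move=> u0; apply: outer_image_neq0.
(* the common column line of [f (u^T *m F^m)] is that of its member [f (u^T *m w)] *)
have h_col u c : ((f (u^T *m w))^T <= c)%MS -> forall x, ((f (u^T *m x))^T <= c)%MS.
  have [-> _ x|u0 hc x] := eqVneq u 0.
    by rewrite trmx0 mul0mx linear0 trmx0 sub0mx.
  have [a fa] := f_col u; apply: submx_trans (fa x) (submx_trans _ hc).
  by apply: rV_sub_nz (fa w); rewrite trmx_eq0 h_inj.
have [[c _ hc]|[b b0 hb]] :=
  rank_le1_family (ltnW n2) h_inj (fun u => rank_outer_image_le1 u w).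
  have fc M : ((f M)^T <= c)%MS.
    rewrite (outer_row_decomp M) !linear_sum summx_sub // => i _.
    exact: h_col (hc _) _.
  have := mxrankS (fc (pid_mx 2)); rewrite mxrank_tr f_rank rank_pid_mx //.
  by move/leq_trans/(_ (rank_leq_row c)).
have [A Afree hA] := common_rowsp_factor b0 hb h_inj.
exists A => [|u x]; first by rewrite -row_free_unit.
by apply: h_col; rewrite [f _]hA trmx_mul trmxK submxMl.
Qed.

Lemma col_pencil_transpose (A : 'M_n) : (2 <= n)%N -> A \in unitmx ->
    (forall (u : 'rV_n) (x : 'rV_m), ((f (u^T *m x))^T <= u *m A)%MS) ->
  col_pencil_preserving (trmx \o f \o trmx).
Proof.
move=> n2 Au fA x.
suff [b fb] : exists b : 'rV_m, forall u : 'rV_n, (f (u^T *m x) <= b)%MS.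
  by exists b => u; rewrite /= trmx_mul !trmxK.
have [->|x0] := eqVneq x 0; first by exists 0 => u; rewrite mulmx0 linear0 sub0mx.
have g_inj u : u != 0 -> (f \o mulmxr x \o trmx) u != 0.
  by move=> u0; apply: outer_image_neq0.
have [[c _ gc]|[b _ gb]] :=
  rank_le1_family (ltnW n2) g_inj (fun u => rank_outer_image_le1 u x); last by exists b.
have uAc (u : 'rV_n) : (u *m A <= c)%MS.
  have [->|u0] := eqVneq u 0; first by rewrite mul0mx sub0mx.
  by apply: submx_trans _ (gc u); apply: rV_sub_nz (fA u x); rewrite trmx_eq0 g_inj.
have Ac : (A <= c)%MS by apply/row_subP => i; rewrite rowE uAc.
have := leq_trans (mxrankS Ac) (rank_leq_row c); rewrite mxrank_unit // => n_le1.
by have := leq_trans n2 n_le1.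
Qed.

Lemma col_pencil_lt : (n < m)%N -> col_pencil_preserving f.
Proof.
move=> lt_nm u; have [->|u0] := eqVneq u 0.
  by exists 0 => x; rewrite trmx0 mul0mx linear0 trmx0 sub0mx.
have g_inj x : x != 0 -> (f \o mulmx u^T) x != 0.
  by move=> x0; apply: outer_image_neq0.
have m0 : (0 < m)%N := leq_ltn_trans (leq0n n) lt_nm.
have [[a _ ga]|[b b0 gb]] := rank_le1_family m0 g_inj (rank_outer_image_le1 u).
  by exists a.
have [K Kfree _] := common_rowsp_factor b0 gb g_inj.
by move: (rank_leq_col K); rewrite (eqP Kfree) leqNgt lt_nm.
Qed.

End RankPreservers.

Lemma col_pencil_structure (F : finFieldType) n m
    (f : {linear 'M[F]_(n, m) -> 'M[F]_(n, m)}) :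
  (2 <= n)%N -> (2 <= m)%N -> (forall M, \rank (f M) = \rank M) ->
  col_pencil_preserving f ->
  (exists2 A : 'M_n, A \in unitmx & forall M, ((f M)^T == M^T *m A)%MS) /\
  (exists2 B : 'M_m, B \in unitmx & forall M, (f M == M *m B)%MS).
Proof.
move=> n2 m2 f_rank f_col.
have fT_rank M : \rank ((trmx \o f \o trmx) M) = \rank M.
  by rewrite /= mxrank_tr f_rank mxrank_tr.
have [A Au fA] := col_pencil_bound f_rank n2 m2 f_col.
have [B Bu fB] := col_pencil_bound fT_rank m2 n2 (col_pencil_transpose f_rank n2 Au fA).
have eq_by_rank p q N (X : 'M[F]_(p, N)) (Y : 'M[F]_(q, N)) :
    (X <= Y)%MS -> \rank X = \rank Y -> (X == Y)%MS.
  by move=> XY rXY; rewrite -(mxrank_leqif_eq XY).2 rXY.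
split; [exists A | exists B] => // M; apply: eq_by_rank.
- have := outer_rowsp_bound (g := trmx \o f \o trmx) (B := A) _ M^T.
  by rewrite /= trmxK; apply=> x u; rewrite trmx_mul trmxK.
- by rewrite mxrank_tr f_rank mxrankMfree ?row_free_unit ?mxrank_tr.
- by apply: outer_rowsp_bound => u x; have := fB x u; rewrite /= trmx_mul !trmxK.
- by rewrite f_rank mxrankMfree ?row_free_unit.
Qed.

Lemma col_pencil_square (F : finFieldType) n (f : {linear 'M[F]_n -> 'M[F]_n}) :
  (forall M, \rank (f M) = \rank M) ->
  col_pencil_preserving f \/ col_pencil_preserving (trmx \o f).
Proof.
move=> f_rank; have f_inj := rank_preserving_inj f_rank.
pose col_line (u : 'rV[F]_n) :=
  [exists a : 'rV[F]_n, [forall x, ((f (u^T *m x))^T <= a)%MS]].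
have [/forallP all_col|/forallPn[u1 u1_row]] := boolP [forall u : 'rV[F]_n, col_line u].
  by left => u; have /existsP[a /forallP fa] := all_col u; exists a.
have u1_0 : u1 != 0.
  apply: contraNneq u1_row => ->; apply/existsP; exists 0; apply/forallP => x.
  by rewrite trmx0 mul0mx linear0 trmx0 sub0mx.
have n0 : (0 < n)%N by apply: leq_trans (rank_leq_col u1); rewrite rank_rV u1_0.
have g_inj (u : 'rV_n) : u != 0 -> forall x, x != 0 -> (f \o mulmx u^T) x != 0.
  by move=> u0 x x0; apply: outer_image_neq0.
have [[a1 _ ga1]|[b1 b1_0 gb1]] :=
  rank_le1_family n0 (g_inj u1 u1_0) (rank_outer_image_le1 f_rank u1).
  by case/negP: u1_row; apply/existsP; exists a1; apply/forallP.
have [K1 K1free gK1] := common_rowsp_factor b1_0 gb1 (g_inj u1 u1_0).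
right=> u; have [->|u0] := eqVneq u 0.
  by exists 0 => x; rewrite /= trmxK trmx0 mul0mx linear0 sub0mx.
have [[a a0 ga]|[b _ gb]] :=
  rank_le1_family n0 (g_inj u u0) (rank_outer_image_le1 f_rank u); last first.
  by exists b => x; rewrite /= trmxK; apply: gb.
have [H Hfree gH] := common_colsp_factor a0 ga (g_inj u u0).
move: K1free Hfree; rewrite !row_free_unit => K1u Hu.
(* [f] maps both [u^T *m F^n] and [u1^T *m F^n] onto a space containing [a^T *m b1] *)
pose x1 := b1 *m invmx H; pose x2 := a *m invmx K1.
have ux1_u1x2 : u^T *m x1 = u1^T *m x2.
  by apply: f_inj; move: (gH x1) (gK1 x2) => /= -> ->; rewrite /x1 /x2 !mulmxKV.
have x2_0 : x2 != 0.
  by rewrite -mxrank_eq0 mxrankMfree ?row_free_unit ?unitmx_inv // mxrank_eq0.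
have [d u1_du] := submxP (sub_outer_eq ux1_u1x2 x2_0).
case/negP: u1_row; apply/existsP; exists a; apply/forallP => x.
by rewrite u1_du trmx_mul -mulmxA; apply: ga.
Qed.

Lemma limg_dim_inj (K : fieldType) (aT rT : vectType K) (f : {linear aT -> rT})
    (U : {vspace aT}) :
  injective f -> \dim (linfun f @: U) = \dim U.
Proof.
move=> f_inj; apply: limg_dim_eq; have /lker0P/eqP-> : injective (linfun f).
  by move=> x y; rewrite !lfunE; apply: f_inj.
exact: capv0.
Qed.

Lemma eq_pm_equiv (F : finFieldType) N1 N2 (rho1 rho1' : {vspace 'rV[F]_N1} -> rat)
    (rho2 rho2' : {vspace 'rV[F]_N2} -> rat) :
  rho1 =1 rho1' -> rho2 =1 rho2' -> pm_equiv rho1' rho2' -> pm_equiv rho1 rho2.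
Proof. by move=> e1 e2 [phi [phi_bij ephi]]; exists phi; split=> // A; rewrite e1 e2. Qed.

Section Subcodes.
Variable F : finFieldType.

Lemma eq_subsp_of (vT : vectType F) (T : finType) (h : T -> vT) (P Q : pred T) :
  P =1 Q -> subsp_of h P = subsp_of h Q.
Proof. by move=> PQ; rewrite /subsp_of (eq_filter PQ). Qed.

Lemma mem_subsp_of_id p q (P : pred 'M[F]_(p, q)) :
  P 0 -> (forall a X Y, P X -> P Y -> P (a *: X + Y)) ->
  subsp_of (@id 'M[F]_(p, q)) P =i P.
Proof.
move=> P0 P_lin X; apply/idP/idP => [|PX]; last first.
  by apply: memv_span; rewrite map_id mem_filter mem_enum andbT.
move/(@coord_span _ _ _ (in_tuple _))->; apply: (big_ind P) => //.
  by move=> Y Z PY PZ; rewrite -[Y]scale1r; apply: P_lin.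
move=> i _; rewrite -[_ *: _]addr0; apply: P_lin => //.
have P_seq Y : Y \in [seq id Y | Y <- enum 'M[F]_(p, q) & P Y] -> P Y.
  by rewrite map_id mem_filter => /andP[].
exact/P_seq/mem_nth.
Qed.

Definition rows_perp N p (K : {vspace 'rV[F]_N}) (X : 'M[F]_(p, N)) : bool :=
  [forall z, (z \in K) ==> (X *m z^T == 0)].

Lemma rows_perp_row N p (K : {vspace 'rV[F]_N}) (X : 'M[F]_(p, N)) :
  rows_perp K X = [forall i, rows_perp K (row i X)].
Proof.
have colE (Y : 'cV[F]_p) : (Y == 0) = [forall i, row i Y == 0].
  apply/eqP/forallP => [-> i|Y0]; first by rewrite row0.
  by apply/row_matrixP => i; rewrite row0; apply/eqP.
apply/forallP/forallP => [XK i|XK z]; first apply/forallP => z.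
  apply/implyP => zK; move: (implyP (XK z) zK); rewrite colE => /forallP/(_ i).
  by rewrite row_mul.
apply/implyP => zK; rewrite colE; apply/forallP => i.
by rewrite row_mul; apply: (implyP (forallP (XK i) z) zK).
Qed.

Lemma mem_perp N (J : {vspace 'rV[F]_N}) : perp J =i rows_perp J.
Proof.
have dotvE x y : (dotv x y == 0) = (x *m y^T == 0).
  have -> : dotv x y = (x *m y^T) 0 0.
    by rewrite !mxE; apply: eq_bigr => i _; rewrite mxE.
  apply/eqP/eqP => [xy0|-> //]; last by rewrite mxE.
  by apply/matrixP => i j; rewrite !ord1 xy0 mxE.
rewrite /perp (eq_subsp_of _ (Q := rows_perp J)) => [|x]; last first.
  by apply: eq_forallb => y; rewrite dotvE.
apply: mem_subsp_of_id => [|a X Y XJ YJ]; apply/forallP => z; apply/implyP => zJ.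
  by rewrite mul0mx.
have /eqP Xz := implyP (forallP XJ z) zJ; have /eqP Yz := implyP (forallP YJ z) zJ.
by rewrite mulmxDl -scalemxAl Xz Yz scaler0 addr0.
Qed.

Lemma rows_perp_eqmx N p q (K : {vspace 'rV[F]_N})
    (X : 'M[F]_(p, N)) (Y : 'M[F]_(q, N)) :
  (X == Y)%MS -> rows_perp K X = rows_perp K Y.
Proof.
have ann p1 p2 (A : 'M[F]_(p1, N)) (B : 'M[F]_(p2, N)) z :
    (A <= B)%MS -> B *m z^T == 0 -> A *m z^T == 0.
  by case/submxP=> D -> /eqP B0; rewrite -mulmxA B0 mulmx0.
case/andP=> XY YX; apply: eq_forallb => z.
by apply/implyP/implyP => ann_z /ann_z; apply: ann.
Qed.

Lemma rows_perp_img N p (R : 'M[F]_N) (K : {vspace 'rV[F]_N}) (X : 'M[F]_(p, N)) :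
  rows_perp (linfun (mulmxr R) @: K)%VS X = rows_perp K (X *m R^T).
Proof.
apply/forallP/forallP => XK z; apply/implyP => zK.
  have := implyP (XK (z *m R)); rewrite trmx_mul mulmxA; apply.
  by have := memv_img (linfun (mulmxr R)) zK; rewrite lfunE.
have [y yK ->] := memv_imgP zK; rewrite lfunE /= trmx_mul mulmxA.
exact: (implyP (XK y) yK).
Qed.

Variables n m : nat.

Lemma colsp_sub_perp (M : 'M[F]_(n, m)) J : colsp_sub M (perp J) = rows_perp J M^T.
Proof. by rewrite rows_perp_row; apply: eq_forallb => j; rewrite mem_perp tr_col. Qed.

Lemma rowsp_sub_perp (M : 'M[F]_(n, m)) K : rowsp_sub M (perp K) = rows_perp K M.
Proof. by rewrite rows_perp_row; apply: eq_forallb => i; rewrite mem_perp. Qed.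

Definition subcode (C : {vspace 'M[F]_(n, m)}) (P : pred 'M[F]_(n, m)) :=
  subsp_of (@id 'M[F]_(n, m)) (fun M => (M \in C) && P M).

Definition rho_of p N (s : 'M[F]_(n, m) -> 'M[F]_(p, N)) (d : nat)
    (C : {vspace 'M[F]_(n, m)}) (K : {vspace 'rV[F]_N}) : rat :=
  ((\dim C)%:R - (\dim (subcode C (fun M => rows_perp K (s M))))%:R) / d%:R.

Lemma rho_cE C : rho_c C =1 rho_of trmx m C.
Proof.
move=> J; rewrite /rho_c /rho_of /subcode_c /subcode.
rewrite (eq_subsp_of _ (Q := fun M => (M \in C) && rows_perp J M^T)) // => M.
by rewrite colsp_sub_perp.
Qed.

Lemma rho_rE C : rho_r C =1 rho_of id n C.
Proof.
move=> K; rewrite /rho_r /rho_of /subcode_r /subcode.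
rewrite (eq_subsp_of _ (Q := fun M => (M \in C) && rows_perp K M)) // => M.
by rewrite rowsp_sub_perp.
Qed.

Lemma dim_subcode_img (f : {linear 'M[F]_(n, m) -> 'M[F]_(n, m)}) C1 C2
    (P1 P2 : pred 'M[F]_(n, m)) :
  injective f -> (linfun f @: C1)%VS = C2 -> (forall M, P2 (f M) = P1 M) ->
  \dim (subcode C2 P2) = \dim (subcode C1 P1).
Proof.
move=> f_inj fC fP; rewrite -(limg_dim_inj (subcode C1 P1) f_inj); congr (\dim _).
have [g _ gK] := injF_bij f_inj.
have memC M : (f M \in C2) = (M \in C1).
  rewrite -fC; apply/memv_imgP/idP => [[N NC1]|MC1]; last by exists M; rewrite ?lfunE.
  by rewrite lfunE => /f_inj->.
rewrite /subcode /subsp_of limg_span; apply: eq_span => N.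
rewrite -[N]gK !map_id (eq_map (lfunE f)) mem_map // !mem_filter /= fP memC.
by rewrite -enumT !mem_enum.
Qed.

Lemma pm_equiv_rho_of p1 p2 N (s1 : 'M[F]_(n, m) -> 'M[F]_(p1, N))
    (s2 : 'M[F]_(n, m) -> 'M[F]_(p2, N)) (d : nat)
    (f : {linear 'M[F]_(n, m) -> 'M[F]_(n, m)}) C1 C2 (Q : 'M[F]_N) :
  injective f -> (linfun f @: C1)%VS = C2 -> Q \in unitmx ->
  (forall M, (s2 (f M) == s1 M *m Q)%MS) ->
  pm_equiv (rho_of s1 d C1) (rho_of s2 d C2).
Proof.
move=> f_inj fC Qu fQ; exists (mulmxr (invmx Q)^T); split.
  have QTu : Q^T \in unitmx by rewrite unitmx_tr.
  by exists (mulmxr Q^T) => z /=; rewrite trmx_inv ?mulmxK ?mulmxKV.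
move=> K; rewrite /rho_of.
rewrite (dim_subcode_img (P1 := fun M => rows_perp K (s1 M)) f_inj fC).
  by rewrite -fC limg_dim_inj.
by move=> M; rewrite (rows_perp_eqmx _ (fQ M)) rows_perp_img trmxK mulmxK.
Qed.

End Subcodes.

Theorem proposition5p7 (F : finFieldType) (n m : nat)
    (C1 C2 : {vspace 'M[F]_(n, m)}) :
  (2 <= n)%N -> (n <= m)%N -> code_equiv C1 C2 ->
  ((n < m)%N ->
     pm_equiv (rho_c C1) (rho_c C2) /\ pm_equiv (rho_r C1) (rho_r C2)) /\
  (n = m ->
     (pm_equiv (rho_c C1) (rho_c C2) /\ pm_equiv (rho_r C1) (rho_r C2)) \/
     (pm_equiv (rho_c C1) (rho_r C2) /\ pm_equiv (rho_r C1) (rho_c C2))).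
Proof.
move=> n2 le_nm [f [f_iso fC]].
have f_rank M : \rank (f M) = \rank M by have := f_iso M 0; rewrite linear0 !subr0.
have f_inj := rank_preserving_inj f_rank.
have m2 := leq_trans n2 le_nm.
have same_sides : col_pencil_preserving f ->
    pm_equiv (rho_c C1) (rho_c C2) /\ pm_equiv (rho_r C1) (rho_r C2).
  case/(col_pencil_structure n2 m2 f_rank) => [[A Au fA] [B Bu fB]]; split.
    apply: eq_pm_equiv (rho_cE C1) (rho_cE C2) _; exact: pm_equiv_rho_of f_inj fC Au fA.
  apply: eq_pm_equiv (rho_rE C1) (rho_rE C2) _; exact: pm_equiv_rho_of f_inj fC Bu fB.
split=> [lt_nm | eq_nm]; first exact/same_sides/col_pencil_lt.
subst m; have [f_col|fT_col] := col_pencil_square f_rank; first by left; apply: same_sides.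
have fT_rank M : \rank ((trmx \o f) M) = \rank M by rewrite /= mxrank_tr f_rank.
have [[A Au fA] [B Bu fB]] := col_pencil_structure n2 n2 fT_rank fT_col.
have fAT M : (f M == M^T *m A)%MS by rewrite -[f M]trmxK fA.
right; split.
  apply: eq_pm_equiv (rho_cE C1) (rho_rE C2) _; exact: pm_equiv_rho_of f_inj fC Au fAT.
apply: eq_pm_equiv (rho_rE C1) (rho_cE C2) _; exact: pm_equiv_rho_of f_inj fC Bu fB.
Qed.
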